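(* Let $G\in M_3(\mathbb{R})$ have eigenvalues $\lambda_1,\lambda_2,\lambda_3$ (counted with algebraic multiplicity) with $\Gamma_k:=\operatorname{Re}\lambda_k\ge 0$ for $k=1,2,3$, and let $f(x)=\det(x\mathbb{1}-G)$ be its characteristic polynomial. Then for every $\alpha\in[1,2]$, $$\Gamma_k\le \tfrac{1}{\alpha}\operatorname{Tr}G\ \text{ for all } k=1,2,3 \quad\Longleftrightarrow\quad f\!\left(\tfrac{\operatorname{Tr}G}{\alpha}\right)\ge 0 .$$ *)

From mathcomp Require Import all_boot all_order all_algebra.
From mathcomp Require Import complex.
From mathcomp Require Import reals.

From mathcomp Require Import all_boot all_order all_algebra.
From mathcomp Require Import complex.
From mathcomp Require Import reals.
From mathcomp Require polyrcf.
From mathcomp Require Import ring lra.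
Import Order.TTheory GRing.Theory Num.Theory.
Set Implicit Arguments.
Unset Strict Implicit.
Unset Printing Implicit Defensive.

Local Open Scope ring_scope.
Local Open Scope complex_scope.

(* The trace is the sum of the real parts of the eigenvalues, so when they are
   all nonnegative and alpha <= 2 at most one of them can have real part above
   s := Tr G / alpha.  If all real parts are <= s, the monic real polynomial f
   has no real root beyond s, so f(s) >= 0 by the intermediate value theorem.
   Conversely, if Re lambda_k > s, then lambda_k must be real (its conjugate is
   an eigenvalue with the same real part), and f(s) = (s - lambda_k) w where w is
   the product of the other two factors s - lambda_j: a real number that is a
   product of two complex numbers with positive real parts, hence positive.  So
   f(s) < 0. *)

Lemma le_sum_pair (R : numDomainType) (I : finType) (F : I -> R) (i j : I) :
  i != j -> (forall k, 0 <= F k) -> F i + F j <= \sum_k F k.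
Proof.
move=> ij F_ge0; rewrite (bigD1 i) //= (bigD1 j) 1?eq_sym //= lerD2l.
by rewrite lerDl sumr_ge0.
Qed.

Section RealPolynomialComplexRoots.

Context {R : rcfType}.
Implicit Types (p : {poly R}) (z : R[i]).

Lemma Re_sum (I : Type) (r : seq I) (P : pred I) (F : I -> R[i]) :
  complex.Re (\sum_(i <- r | P i) F i) = \sum_(i <- r | P i) complex.Re (F i).
Proof. by apply: (big_morph _ _ (erefl : complex.Re 0 = 0)) => [[a b] [c d]]. Qed.

Lemma monic_horner_lt0_root_gt p s :
  p \is monic -> p.[s] < 0 -> exists2 x, s < x & root p x.
Proof.
move=> p_monic ps_lt0.
have lc_gt0 : 0 < lead_coef p by rewrite (monicP p_monic).
have [n Hn] := polyrcf.poly_pinfty_gt_lc lc_gt0.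
have s_le_b : s <= Order.max n s by rewrite le_max lexx orbT.
have pb_gt0 : 0 < p.[Order.max n s].
  by apply: lt_le_trans lc_gt0 (Hn _ _); rewrite le_max lexx.
have [x /andP[sx _] rx] : exists2 x, s <= x <= Order.max n s & root p x.
  by apply: poly_ivt s_le_b _; apply/andP; split; apply: ltW.
exists x => //; rewrite lt_neqAle sx andbT.
by apply: contraTneq rx => <-; rewrite rootE lt_eqF.
Qed.

Lemma root_map_complex_conj p z :
  root (map_poly (real_complex R) p) z -> root (map_poly (real_complex R) p) z^*.
Proof.
rewrite -complex_root_conj -map_poly_comp.
by rewrite (eq_map_poly (fun x => conjc_real x)).
Qed.

Lemma root_prod_XsubC_ord n (lam : 'I_n -> R[i]) z :
  root (\prod_(k < n) ('X - (lam k)%:P)) z -> exists k, z = lam k.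
Proof.
rewrite -(big_map lam predT (fun w => 'X - w%:P)) root_prod_XsubC.
by case/mapP=> k _ ->; exists k.
Qed.

Lemma mul_Re_gt0_real (b c : R[i]) :
  0 < complex.Re b -> 0 < complex.Re c -> complex.Im (b * c) = 0 -> 0 < b * c.
Proof.
case: b => u v; case: c => w z /= u_gt0 w_gt0 Im0; rewrite ltcE /= Im0 eqxx /=.
have uv_gt0 : 0 < u ^+ 2 + v ^+ 2 by apply: ltr_wpDr (sqr_ge0 v) (exprn_gt0 2 u_gt0).
have E : u * (u * w - v * z) = w * (u ^+ 2 + v ^+ 2) - v * (u * z + v * w).
  by ring.
by rewrite -(pmulr_rgt0 _ u_gt0) E Im0 mulr0 subr0 mulr_gt0.
Qed.

Lemma complex_ReB (a b : R[i]) :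
  complex.Re (a - b) = complex.Re a - complex.Re b.
Proof. by case: a; case: b. Qed.

Lemma mxtrace_Re_roots n (G : 'M[R]_n) (lam : 'I_n -> R[i]) :
  map_poly (real_complex R) (char_poly G) = \prod_(k < n) ('X - (lam k)%:P) ->
  \tr G = \sum_k complex.Re (lam k).
Proof.
case: n G lam => [|n] G lam Hlam; first by rewrite /mxtrace !big_ord0.
have size_lam : size (map lam (index_enum 'I_n.+1)) = n.+1.
  by rewrite size_map /index_enum -enumT size_enum_ord.
have := @coefPn_prod_XsubC _ (map lam (index_enum 'I_n.+1)).
rewrite size_lam big_map -Hlam coef_map /= char_poly_trace // rmorphN.
move=> /(_ isT) /oppr_inj /(congr1 (@complex.Re R)) /= ->.
by rewrite Re_sum big_map.
Qed.

Lemma real_root_of_unique_Re n p (lam : 'I_n -> R[i]) k :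
  map_poly (real_complex R) p = \prod_(j < n) ('X - (lam j)%:P) ->
  (forall j, j != k -> complex.Re (lam j) != complex.Re (lam k)) ->
  lam k = (complex.Re (lam k))%:C.
Proof.
move=> Hp Re_neq.
have [j conj_kj] : exists j, (lam k)^* = lam j.
  apply/root_prod_XsubC_ord; rewrite -Hp; apply: root_map_complex_conj.
  by rewrite rootE Hp horner_prod (bigD1 k) //= hornerXsubC subrr mul0r.
have jk : j = k.
  apply/eqP; apply/negPn/negP => /Re_neq.
  by rewrite -conj_kj; case: (lam k) => a b /=; rewrite eqxx.
move: conj_kj; rewrite jk; case: (lam k) => a b [] /= Nb.
by congr Complex; lra.
Qed.

Lemma horner_ge0_of_Re_roots_le n p (lam : 'I_n -> R[i]) s :
  map_poly (real_complex R) p = \prod_(k < n) ('X - (lam k)%:P) ->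
  (forall k, complex.Re (lam k) <= s) -> 0 <= p.[s].
Proof.
move=> Hp Re_le; rewrite leNgt; apply/negP => ps_lt0.
have p_monic : p \is monic.
  by rewrite -(map_monic (real_complex R)) Hp monic_prod_XsubC.
have [x sx rx] := monic_horner_lt0_root_gt p_monic ps_lt0.
have [k xk] : exists k, x%:C = lam k.
  by apply: root_prod_XsubC_ord; rewrite -Hp rootE horner_map (rootP rx) rmorph0.
by have := Re_le k; rewrite -xk /= leNgt sx.
Qed.

Lemma Re_roots_le_of_horner_ge0 p (lam : 'I_3 -> R[i]) s :
  map_poly (real_complex R) p = \prod_(k < 3) ('X - (lam k)%:P) ->
  (forall k, 0 <= complex.Re (lam k)) -> \sum_k complex.Re (lam k) <= 2 * s ->
  0 <= p.[s] -> forall k, complex.Re (lam k) <= s.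
Proof.
move=> Hp Re_ge0 sum_le ps_ge0 k; rewrite leNgt; apply/negP => s_lt_k.
have Re_lt : forall j, j != k -> complex.Re (lam j) < s.
  by move=> j jk; have := le_sum_pair jk Re_ge0; lra.
have lam_k_real : lam k = (complex.Re (lam k))%:C.
  apply: (real_root_of_unique_Re Hp) => j /Re_lt jk.
  by rewrite lt_eqF // (lt_trans jk).
set z := fun j => s%:C - lam j.
set r := s - complex.Re (lam k).
have zk : z k = r%:C by rewrite /z /r {1}lam_k_real rmorphB.
have r_lt0 : r < 0 by rewrite subr_lt0.
have [w p_s w_gt0] :
    exists2 w, (p.[s])%:C = z k * w & complex.Im w = 0 -> 0 < w.
  exists (\prod_(i < 2) z (lift k i)).
    rewrite -horner_map Hp horner_prod (bigD1_ord k) //= hornerXsubC.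
    by congr (_ * _); apply: eq_bigr => i _; rewrite hornerXsubC.
  rewrite !big_ord_recl big_ord0 mulr1; apply: mul_Re_gt0_real;
    by rewrite complex_ReB subr_gt0 Re_lt // eq_sym neq_lift.
have w_real : w = (p.[s] / r)%:C.
  by rewrite fmorph_div /= p_s zk [_ * w]mulrC mulfK // (inj_eq (@complexI R)) lt_eqF.
move: w_gt0; rewrite w_real ltcE /= eqxx => /(_ erefl) /=.
by rewrite ltNge mulr_ge0_le0 // invr_le0 ltW.
Qed.

End RealPolynomialComplexRoots.

Theorem mainTheorem2 (R : realType) (G : 'M[R]_3) (lam : 'I_3 -> R[i])
  (Hlam : map_poly (real_complex R) (char_poly G)
          = \prod_(k < 3) ('X - (lam k)%:P))
  (Hre : forall k : 'I_3, 0 <= complex.Re (lam k))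
  (alpha : R) (Halpha : 1 <= alpha <= 2) :
  (forall k : 'I_3, complex.Re (lam k) <= \tr G / alpha)
  <-> 0 <= (char_poly G).[\tr G / alpha].
Proof.
have tr_eq := mxtrace_Re_roots Hlam.
have tr_ge0 : 0 <= \tr G by rewrite tr_eq; apply: sumr_ge0 => i _; apply: Hre.
have [alpha_ge1 alpha_le2] := andP Halpha.
split => [Re_le | fs_ge0]; first exact: horner_ge0_of_Re_roots_le Hlam Re_le.
apply: Re_roots_le_of_horner_ge0 Hlam Hre _ fs_ge0.
rewrite -tr_eq mulrA ler_pdivlMr ?(lt_le_trans ltr01) //.
by rewrite [2 * _]mulrC ler_wpM2l.
Qed.
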